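(* Let $p\in(1,\infty)$ and $q\in[1,\infty]$. For every $k\in\mathbb N$ the unit vector basis of $\ell_q^k$ belongs to $\{X_p^{q,\omega}\}_k$.
   Context: Define $X^{q,0}_p=\mathbb R$ and inductively $X^{q,k}_p=\mathbb R\oplus_q\ell_p(X^{q,k-1}_p)$ (the $\ell_q$-direct sum of $\mathbb R$ with the $\ell_p$-sum of countably many copies of $X^{q,k-1}_p$), and $X^{q,\omega}_p=(\bigoplus_{k=0}^\infty X^{q,k}_p)_{\ell_p}$. For a Banach space $X$, $\{X\}_k$ is the set of norms $E$ on $\mathbb R^k$ for which the unit vector basis $(e_j)$ is normalized and monotone and such that: for every $\varepsilon>0$, for every closed finite-codimensional $X_1$ there is $x_1\in S_{X_1}$, ..., for every closed finite-codimensional $X_k$ there is $x_k\in S_{X_k}$, with $(x_j)_{j=1}^k$ $(1+\varepsilon)$-equivalent to $(e_j)_{j=1}^k$ ($C$-equivalent meaning $\frac1A\|\sum a_ix_i\|\le\|\sum a_ie_i\|\le B\|\sum a_ix_i\|$ with $AB\le C$). *)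

From mathcomp Require Import all_boot all_order all_algebra.
From mathcomp Require Import all_classical all_reals all_analysis.
Import Order.TTheory GRing.Theory Num.Theory.

Set Implicit Arguments.
Unset Strict Implicit.
Unset Printing Implicit Defensive.

Local Open Scope classical_set_scope.
Local Open Scope ring_scope.

(* q = +oo meaning the l_infty sum.                                          *)
(* A vector of X^{q,k}_p is represented as a tree-indexed family            *)
(* x : seq nat -> R : x [::] is the R-coordinate, and for every n, the      *)
(* function (fun s => x (n :: s)) is the n-th coordinate in                  *)
(* l_p(X^{q,k-1}_p).  Only nodes of depth <= k are used.                     *)
(* Norms are computed in \bar R (value +oo = vector not in the space).       *)

Section Spaces.
Context {R : realType}.
Local Open Scope ereal_scope.

Definition lq_pair (q : \bar R) (a b : \bar R) : \bar R :=
  if q == +oo then maxe a b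
  else ((a `^ fine q) + (b `^ fine q)) `^ (fine q)^-1.

Definition lp_seq (p : R) (a : nat -> \bar R) : \bar R :=
  (\sum_(n <oo) (a n `^ p)) `^ p^-1.

Fixpoint Xk_norm (p : R) (q : \bar R) (k : nat) (x : seq nat -> R) : \bar R :=
  match k with
  | 0 => (`| x [::] |)%:E
  | k'.+1 => lq_pair q (`| x [::] |)%:E
                       (lp_seq p (fun n => Xk_norm p q k' (fun s => x (n :: s))))
  end.

(* X^{q,omega}_p = (sum_k X^{q,k}_p)_{l_p}; a vector is x : nat -> seq nat -> R, *)
(* x k being the k-th component, an element of X^{q,k}_p.                    *)
Definition Xw_norm (p : R) (q : \bar R) (x : nat -> seq nat -> R) : \bar R :=
  lp_seq p (fun k => Xk_norm p q k (x k)).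

Definition Xw_space (p : R) (q : \bar R) : set (nat -> seq nat -> R) :=
  [set x | Xw_norm p q x < +oo /\ forall k s, (k < size s)%N -> x k s = 0%R].

End Spaces.

(* A normed space is given by a carrier S : set V inside a real vector space *)
(* V, and a norm nrm : V -> \bar R (finite on S).                             *)

Section Asymptotic.
Context {R : realType} {V : lmodType R}.
Variables (S : set V) (nrm : V -> \bar R).
Local Open Scope ereal_scope.

Definition closed_fincodim (Y : set V) : Prop :=
  [/\ Y `<=` S,
      Y 0%R,
      (forall (a : R) (x y : V), Y x -> Y y -> Y (a *: x + y)%R),
      (forall x, S x ->
         (forall e : R, (0 < e)%R -> exists2 y, Y y & nrm (x - y)%R < e%:E) ->
         Y x) &
      (exists (m : nat) (v : 'I_m -> V), (forall i, S (v i)) /\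
         forall x, S x -> exists (y : V) (c : 'I_m -> R),
           Y y /\ x = (y + \sum_(i < m) c i *: v i)%R)].

Definition equiv_basis (k : nat) (C : R) (E : ('I_k -> R) -> R)
    (x : 'I_k -> V) : Prop :=
  exists A B : R, [/\ (0 < A)%R, (0 < B)%R, (A * B <= C)%R &
    forall a : 'I_k -> R,
      (A^-1)%:E * nrm (\sum_(i < k) a i *: x i)%R <= (E a)%:E /\
      (E a)%:E <= B%:E * nrm (\sum_(i < k) a i *: x i)%R].

Fixpoint asym_game (k : nat) (C : R) (E : ('I_k -> R) -> R)
    (m : nat) (xs : seq V) : Prop :=
  match m with
  | 0 => equiv_basis C E (fun i : 'I_k => nth 0%R xs i)
  | m'.+1 => forall Y, closed_fincodim Y ->
             exists2 x, Y x & (nrm x = 1%E /\ asym_game C E m' (rcons xs x))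
  end.

End Asymptotic.

Section Norms.
Context {R : realType}.

Definition is_norm (k : nat) (E : ('I_k -> R) -> R) : Prop :=
  [/\ forall a, 0 <= E a,
      forall a, E a = 0 -> a = (fun=> 0),
      forall (c : R) a, E (fun i => c * a i) = `|c| * E a &
      forall a b, E (fun i => a i + b i) <= E a + E b].

Definition normalized_monotone (k : nat) (E : ('I_k -> R) -> R) : Prop :=
  (forall j : 'I_k, E (fun i => if i == j then 1 else 0) = 1) /\
  (forall (a : 'I_k -> R) (m : nat),
      E (fun i => if (i < m)%N then a i else 0) <= E a).

Definition in_asym_k {V : lmodType R} (S : set V) (nrm : V -> \bar R)
    (k : nat) (E : ('I_k -> R) -> R) : Prop :=
  [/\ is_norm E, normalized_monotone E &
      forall eps : R, 0 < eps -> asym_game S nrm (1 + eps) E k [::]].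

Definition lq_norm (q : \bar R) (k : nat) (a : 'I_k -> R) : R :=
  if q == +oo%E then \big[Num.max/0]_(i < k) `|a i|
  else (\sum_(i < k) `|a i| `^ fine q) `^ (fine q)^-1.

End Norms.

From mathcomp Require Import all_boot all_order all_algebra.
From mathcomp Require Import all_classical all_reals all_analysis.
Import Order.TTheory GRing.Theory Num.Theory.

(* For levels b = (b_0, ..., b_(k-1)) and finitely supported unit vectors
   c_0, c_1, ... of l_p, consider the vector of X^{q,omega}_p whose K-th component
   (K >= k) takes at the node s = (s_0, ..., s_(n-1)) the value
   b_n c_0(K - k) c_1(s_0) ... c_n(s_(n-1)).  The l_p-sums only see the unit
   vectors c_t, so the nested l_q-sums collapse to the l_q^k-norm of b: the maps
   b |-> x_b are isometries.  The vector x_j obtained for b = e_j is linear in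
   c_j, and c_j enters no x_i with i < j.  Hence in the asymptotic game the j-th
   move can be answered by choosing c_j: among c_j = e_0, ..., e_m some
   normalized nontrivial combination lies in any given subspace of codimension
   at most m. *)

Set Implicit Arguments.
Unset Strict Implicit.
Unset Printing Implicit Defensive.

Local Open Scope ring_scope.

Section PowR.
Context {R : realType}.
Implicit Types r x : R.

Lemma powRK r x : r != 0 -> 0 <= x -> (x `^ r) `^ r^-1 = x.
Proof. by move=> r0 x0; rewrite -powRrM mulfV // powRr1. Qed.

Lemma powRKV r x : r != 0 -> 0 <= x -> (x `^ r^-1) `^ r = x.
Proof. by move=> r0 x0; rewrite -powRrM mulVf // powRr1. Qed.

Lemma sumr_powR_ge0 n (F : 'I_n -> R) r : 0 <= \sum_i F i `^ r.
Proof. by apply: sumr_ge0 => i _; exact: powR_ge0. Qed.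

Lemma lp_seq_finsupp (p : R) (a : nat -> \bar R) M : 0 < p ->
  (forall n, (M <= n)%N -> a n = 0%E) ->
  lp_seq p a = ((\sum_(n < M) a n `^ p) `^ p^-1)%E.
Proof.
move=> p0 aM; rewrite /lp_seq (nneseries_split 0 M); last by move=> n _; exact: poweR_ge0.
rewrite eseries0 ?adde0 ?add0n ?big_mkord // => n /aM -> _.
by rewrite poweR0r // gt_eqF.
Qed.

End PowR.

Section ZeroExtension.
Context {R : realType}.

Definition unit_seq (i : nat) : nat -> R := fun m => (m == i)%:R.

Lemma unit_seq_out i m : (i < m)%N -> unit_seq i m = 0.
Proof. by move=> im; rewrite /unit_seq gtn_eqF. Qed.

Definition extz n (a : 'I_n -> R) : nat -> R := fun m => \sum_(i < n) a i * unit_seq i m.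

Lemma extz_ord n (a : 'I_n -> R) (j : 'I_n) : extz a j = a j.
Proof.
rewrite /extz (bigD1 j) //= /unit_seq eqxx mulr1 big1 ?addr0 // => i ij.
by rewrite val_eqE eq_sym (negbTE ij) mulr0.
Qed.

Lemma extz_out n (a : 'I_n -> R) m : (n <= m)%N -> extz a m = 0.
Proof.
by move=> nm; rewrite /extz big1 // => i _; rewrite unit_seq_out ?mulr0 // (leq_trans _ nm).
Qed.

Lemma Lnorm_counting_extz (r : R) n (a : 'I_n -> R) : 0 < r ->
  ('N[counting]_r%:E [EFin \o extz a])%E = ((\sum_i `|a i| `^ r) `^ r^-1)%:E.
Proof.
move=> r0; rewrite Lnorm_counting // -/(lp_seq r _) (@lp_seq_finsupp _ _ _ n) //; last first.
  by move=> m nm; rewrite /= extz_out // normr0.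
rewrite (eq_bigr (fun i : 'I_n => (`|a i| `^ r)%:E)) => [|i _]; last by rewrite /= extz_ord.
by rewrite sumEFin.
Qed.

Lemma minkowski_sum (r : R) n (a b : 'I_n -> R) : 1 <= r ->
  (\sum_i `|a i + b i| `^ r) `^ r^-1 <=
  (\sum_i `|a i| `^ r) `^ r^-1 + (\sum_i `|b i| `^ r) `^ r^-1.
Proof.
move=> r1; have r0 : 0 < r by exact: lt_le_trans r1.
have extzD : (extz a \+ extz b)%R = extz (fun i => a i + b i).
  by apply/funext => m; rewrite /extz /= -big_split; apply: eq_bigr => i _; rewrite mulrDl.
have := @minkowski_EFin _ _ R counting (extz a) (extz b) r.
by rewrite extzD !Lnorm_counting_extz // -EFinD lee_fin; apply.
Qed.

End ZeroExtension.

Section LqNorm.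
Context {R : realType}.
Variable q : \bar R.
Hypothesis q_ge1 : (1%:E <= q)%E.

Lemma fine_ge1 : q != +oo%E -> 1 <= fine q.
Proof. by case: q q_ge1 => //= r; rewrite lee_fin. Qed.

Lemma fine_neq0 : q != +oo%E -> fine q != 0.
Proof. by move=> /fine_ge1 r1; rewrite gt_eqF // (lt_le_trans _ r1). Qed.

Lemma lq_norm_infty k (a : 'I_k -> R) :
  q = +oo%E -> lq_norm q a = \big[Num.max/0]_(i < k) `|a i|.
Proof. by move=> ->; rewrite /lq_norm eqxx. Qed.

Lemma lq_norm_fin k (a : 'I_k -> R) :
  q != +oo%E -> lq_norm q a = (\sum_(i < k) `|a i| `^ fine q) `^ (fine q)^-1.
Proof. by move=> /negbTE qfin; rewrite /lq_norm qfin. Qed.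

Lemma lq_norm_is_norm k : is_norm (lq_norm q (k := k)).
Proof.
have [qoo|qfin] := eqVneq q +oo%E.
  split=> [a|a|c a|a b]; rewrite !lq_norm_infty //.
  - exact: bigmax_ge_id.
  - move=> a0; apply/funext => i; apply/normr0_eq0/le_anti.
    by rewrite normr_ge0 -a0 (le_bigmax 0 (fun i => `|a i|)).
  - rewrite (big_morph _ (fun y z => maxr_pMr y z (normr_ge0 c)) (mulr0 _)).
    by apply: eq_bigr => i _; rewrite normrM.
  - apply: bigmax_le => [|i _]; first by rewrite addr_ge0 ?bigmax_ge_id.
    apply: le_trans (ler_normD _ _) (lerD _ _); exact: le_bigmax 0 (fun i => `|_ i|) i.
have r1 := fine_ge1 qfin; have r0 : 0 < fine q by exact: lt_le_trans r1.
split=> [a|a|c a|a b]; rewrite !lq_norm_fin //.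
- exact: powR_ge0.
- move=> /powR_eq0_eq0 /psumr_eq0P a0; apply/funext => i.
  by apply/normr0_eq0/powR_eq0_eq0/a0 => // j _; exact: powR_ge0.
- under eq_bigr do rewrite normrM powRM //.
  by rewrite -mulr_sumr powRM ?powR_ge0 ?sumr_powR_ge0 // powRK ?gt_eqF ?sumr_powR_ge0.
- exact: minkowski_sum.
Qed.

Lemma lq_norm_ge0 k (a : 'I_k -> R) : 0 <= lq_norm q a.
Proof. by case: (lq_norm_is_norm k). Qed.

Lemma lq_normZ k c (a : 'I_k -> R) : lq_norm q (fun i => c * a i) = `|c| * lq_norm q a.
Proof. by case: (lq_norm_is_norm k). Qed.

Lemma lq_norm_unit k (j : 'I_k) : lq_norm q (fun i => if i == j then 1 else 0) = 1.
Proof.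
have [qoo|qfin] := eqVneq q +oo%E.
  rewrite lq_norm_infty //.
  apply/le_anti; rewrite (le_trans _ (le_bigmax 0 _ j)) ?eqxx ?normr1 // andbT.
  by apply: bigmax_le => // i _; case: eqP; rewrite ?normr1 ?normr0.
rewrite lq_norm_fin // (bigD1 j) //= eqxx normr1 powR1 big1 ?addr0 ?powR1 // => i /negbTE ->.
by rewrite normr0 powR0 ?fine_neq0.
Qed.

Lemma lq_norm_normalized_monotone k : normalized_monotone (lq_norm q (k := k)).
Proof.
split=> [|a m]; first exact: lq_norm_unit.
have [qoo|qfin] := eqVneq q +oo%E.
  rewrite !lq_norm_infty //; apply: bigmax_le => [|i _]; first exact: bigmax_ge_id.
  apply: le_trans (le_bigmax 0 (fun i => `|a i|) i).
  by case: ifP; rewrite ?normr0.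
have r0 : 0 < fine q by exact: lt_le_trans (fine_ge1 qfin).
rewrite !(lq_norm_fin _ qfin); apply: ge0_ler_powR; rewrite ?nnegrE ?sumr_powR_ge0 //.
  by rewrite invr_ge0 ltW.
apply: ler_sum => i _; case: ifP => // _.
by rewrite normr0 powR0 ?gt_eqF ?powR_ge0.
Qed.

Definition lq_seq K (b : nat -> R) : R := lq_norm q (fun i : 'I_K => b i).

Lemma lq_seqZ K c b : lq_seq K (fun j => c * b j) = `|c| * lq_seq K b.
Proof. exact: lq_normZ. Qed.

Lemma lq_seq1 b : lq_seq 1 b = `|b 0%N|.
Proof.
rewrite /lq_seq; have [qoo|qfin] := eqVneq q +oo%E.
  by rewrite lq_norm_infty // big_ord_recl big_ord0 max_l.
by rewrite lq_norm_fin // big_ord1 powRK ?fine_neq0.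
Qed.

Lemma lq_seq_cons K b :
  lq_pair q (`|b 0%N|)%:E (lq_seq K (fun j => b j.+1))%:E = (lq_seq K.+1 b)%:E.
Proof.
rewrite /lq_seq /lq_pair; have [qoo|qfin] := eqVneq q +oo%E.
  by rewrite !lq_norm_infty // big_ord_recl EFin_max.
by rewrite !lq_norm_fin // !poweR_EFin powRKV ?fine_neq0 ?sumr_powR_ge0 // big_ord_recl.
Qed.

Lemma lq_seq_pad k K b : (k <= K)%N -> (forall j, (k <= j)%N -> b j = 0) ->
  lq_seq K b = lq_seq k b.
Proof.
move=> kK bk; rewrite /lq_seq; have [qoo|qfin] := eqVneq q +oo%E.
  rewrite !lq_norm_infty // (big_ord_widen _ (fun i => `|b i|) kK) [RHS]bigmax_mkcond.
  by apply: eq_bigr => i _; case: ltnP => // /bk ->; rewrite normr0.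
rewrite !lq_norm_fin // (big_ord_widen _ (fun i => `|b i| `^ fine q) kK) [in RHS]big_mkcond.
by congr (_ `^ _); apply: eq_bigr => i _; case: ltnP => // /bk ->; rewrite normr0 powR0 ?fine_neq0.
Qed.

Lemma lq_seq_unit_seq k j : (j < k)%N -> lq_seq k (unit_seq j) = 1.
Proof.
move=> jk; rewrite /lq_seq -(lq_norm_unit (Ordinal jk)); congr lq_norm.
by apply/funext => i; rewrite /unit_seq -val_eqE; case: eqP.
Qed.

End LqNorm.

Section LpUnit.
Context {R : realType}.
Variable p : R.
Hypothesis p_gt0 : 0 < p.

Definition lp_unit (c : nat -> R) : Prop :=
  exists M, (forall n, (M <= n)%N -> c n = 0) /\ \sum_(n < M) `|c n| `^ p = 1.

Lemma lp_seq_lp_unit c X : lp_unit c -> 0 <= X ->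
  lp_seq p (fun n => (`|c n| * X)%:E) = X%:E.
Proof.
move=> [M [cM c1]] X0; rewrite (@lp_seq_finsupp _ _ _ M) // => [|n /cM ->]; last first.
  by rewrite normr0 mul0r.
rewrite (eq_bigr (fun n : 'I_M => (`|c n| `^ p * X `^ p)%:E)) => [|n _]; last first.
  by rewrite poweR_EFin powRM.
by rewrite sumEFin -mulr_suml c1 mul1r poweR_EFin powRK ?gt_eqF.
Qed.

Lemma lp_unit_unit_seq i : lp_unit (unit_seq i).
Proof.
exists i.+1; split=> [n|]; first exact: unit_seq_out.
rewrite big_ord_recr /= big1 => [|n _]; first by rewrite /unit_seq eqxx normr1 powR1 add0r.
by rewrite /unit_seq ltn_eqF // normr0 powR0 ?gt_eqF.
Qed.

Definition shiftn k (c : nat -> R) (n : nat) : R := if (k <= n)%N then c (n - k)%N else 0.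

Lemma lp_unit_shiftn k c : lp_unit c -> lp_unit (shiftn k c).
Proof.
move=> [M [cM c1]]; exists (k + M)%N; split=> [n kMn|].
  by rewrite /shiftn (leq_trans (leq_addr M k) kMn) cM // leq_subRL // (leq_trans (leq_addr M k)).
rewrite big_split_ord /= big1 ?add0r => [|i _]; last first.
  by rewrite /shiftn leqNgt ltn_ord normr0 powR0 ?gt_eqF.
by rewrite -c1; apply: eq_bigr => i _; rewrite /shiftn leq_addr addKn.
Qed.

Lemma lp_unit_upd (cs : nat -> nat -> R) (j : nat) (h : nat -> R) :
  (forall t, lp_unit (cs t)) -> lp_unit h ->
  forall t, lp_unit ([eta cs with j |-> h] t).
Proof. by move=> cs_unit h_unit t /=; case: eqP. Qed.

Lemma lp_unit_extz n (a : 'I_n -> R) : lq_norm p%:E a = 1 -> lp_unit (extz a).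
Proof.
rewrite /lq_norm /= => a1; exists n; split=> [m|]; first exact: extz_out.
rewrite (eq_bigr (fun i => `|a i| `^ p)) => [|i _]; last by rewrite extz_ord.
by rewrite -(powRKV (lt0r_neq0 p_gt0) (sumr_powR_ge0 _ _)) a1 powR1.
Qed.

End LpUnit.

Section Trees.
Context {R : realType}.
Variables (p : R) (q : \bar R).
Hypotheses (p_gt0 : 0 < p) (q_ge1 : (1%:E <= q)%E).

Definition path_weight (cs : nat -> nat -> R) (s : seq nat) : R :=
  \prod_(t < size s) cs t (nth 0%N s t).

Definition tree (b : nat -> R) (cs : nat -> nat -> R) (s : seq nat) : R :=
  b (size s) * path_weight cs s.

Lemma tree_cons b cs n s :
  tree b cs (n :: s) = tree (fun j => cs 0%N n * b j.+1) (fun t => cs t.+1) s.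
Proof. by rewrite /tree /path_weight /= big_ord_recl /= mulrCA mulrA. Qed.

Lemma Xk_norm_tree K b cs : (forall t, lp_unit p (cs t)) ->
  Xk_norm p q K (tree b cs) = (lq_seq q K.+1 b)%:E.
Proof.
elim: K b cs => [|K IH] b cs cs_unit.
  by rewrite /= lq_seq1 // /tree /path_weight big_ord0 mulr1.
have subtree n : Xk_norm p q K (fun s => tree b cs (n :: s)) =
    (`|cs 0%N n| * lq_seq q K.+1 (fun j => b j.+1))%:E.
  under eq_fun do rewrite tree_cons.
  by rewrite IH // lq_seqZ.
rewrite /= -lq_seq_cons // /tree /path_weight big_ord0 mulr1.
by under eq_fun do rewrite subtree; rewrite lp_seq_lp_unit // lq_norm_ge0.
Qed.

Definition level_vec k (b : nat -> R) (cs : nat -> nat -> R) : nat -> seq nat -> R :=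
  fun K s => if (k <= K)%N then b (size s) * path_weight cs ((K - k)%N :: s) else 0.

Lemma level_vecE k b cs K :
  level_vec k b cs K = tree (fun j => shiftn k (cs 0%N) K * b j) (fun t => cs t.+1).
Proof.
apply/funext => s; rewrite /level_vec /tree /shiftn.
case: ifP => _; last by rewrite !mul0r.
by rewrite /path_weight /= big_ord_recl /= mulrCA mulrA.
Qed.

Lemma Xw_norm_level_vec k b cs : (forall t, lp_unit p (cs t)) ->
  (forall j, (k <= j)%N -> b j = 0) ->
  Xw_norm p q (level_vec k b cs) = (lq_seq q k b)%:E.
Proof.
move=> cs_unit bk.
have XkE K : Xk_norm p q K (level_vec k b cs K) =
    (`|shiftn k (cs 0%N) K| * lq_seq q k b)%:E.
  rewrite level_vecE Xk_norm_tree => [|t]; last exact: cs_unit.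
  rewrite lq_seqZ // /shiftn; case: (leqP k K) => kK.
    by rewrite (lq_seq_pad q_ge1 (leqW kK)).
  by rewrite normr0 !mul0r.
rewrite /Xw_norm (eq_fun XkE).
by rewrite lp_seq_lp_unit ?lq_norm_ge0 //; apply: lp_unit_shiftn.
Qed.

Lemma level_vec_in_Xw_space k b cs : (forall t, lp_unit p (cs t)) ->
  (forall j, (k <= j)%N -> b j = 0) -> Xw_space p q (level_vec k b cs).
Proof.
move=> cs_unit bk; split; first by rewrite Xw_norm_level_vec // ltry.
move=> K s Ks; rewrite /level_vec; case: ifP => // kK.
by rewrite bk ?mul0r // (leq_trans kK (ltnW Ks)).
Qed.

End Trees.

Section LevelVecLinear.
Context {R : realType}.
Variable k : nat.
Implicit Types (cs : nat -> nat -> R) (h : nat -> R).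

Lemma sumZ_apply2 (T U : Type) n (a : 'I_n -> R) (f : 'I_n -> T -> U -> R) x y :
  (\sum_i a i *: f i) x y = \sum_i a i * f i x y.
Proof. by rewrite !fct_sumE. Qed.

Lemma level_vec_sum n (a : 'I_n -> R) (B : 'I_n -> nat -> R) cs :
  \sum_i a i *: level_vec k (B i) cs = level_vec k (fun j => \sum_i a i * B i j) cs.
Proof.
apply/funext => K; apply/funext => s; rewrite sumZ_apply2 /level_vec.
case: ifP => _; last by rewrite big1 // => i _; rewrite mulr0.
by rewrite mulr_suml; apply: eq_bigr => i _; rewrite mulrA.
Qed.

Lemma path_weight_upd cs j h s : (size s <= j)%N ->
  path_weight [eta cs with j |-> h] s = path_weight cs s.
Proof.
move=> sj; apply: eq_bigr => t _ /=.
by rewrite ltn_eqF // (leq_trans (ltn_ord t)).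
Qed.

Lemma path_weight_upd_last cs j h s : size s = j.+1 ->
  path_weight [eta cs with j |-> h] s =
  (\prod_(t < j) cs t (nth 0%N s t)) * h (nth 0%N s j).
Proof.
rewrite /path_weight => ->; rewrite big_ord_recr /= eqxx; congr (_ * _).
by apply: eq_bigr => t _ /=; rewrite ltn_eqF.
Qed.

Lemma level_vec_upd_lt i j h cs : (i < j)%N ->
  level_vec k (unit_seq i) [eta cs with j |-> h] = level_vec k (unit_seq i) cs.
Proof.
move=> ij; apply/funext => K; apply/funext => s; rewrite /level_vec /unit_seq.
case: eqP => [si|_]; last by rewrite !mul0r; case: ifP.
by rewrite path_weight_upd //= si.
Qed.

Lemma level_vec_upd_sum j n (a : 'I_n -> R) (H : 'I_n -> nat -> R) cs :
  \sum_i a i *: level_vec k (unit_seq j) [eta cs with j |-> H i] =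
  level_vec k (unit_seq j) [eta cs with j |-> fun m => \sum_i a i * H i m].
Proof.
apply/funext => K; apply/funext => s; rewrite sumZ_apply2 /level_vec /unit_seq.
case: ifP => _; last by rewrite big1 // => i _; rewrite mulr0.
case: eqP => [sj|_]; last by rewrite mul0r big1 // => i _; rewrite mul0r mulr0.
rewrite path_weight_upd_last /= ?sj // mul1r mulr_sumr.
by apply: eq_bigr => i _; rewrite path_weight_upd_last /= ?sj // mul1r mulrCA.
Qed.

End LevelVecLinear.

Section FiniteCodimension.
Context {R : realType} {V : lmodType R}.
Variables (S : set V) (nrm : V -> \bar R) (Y : set V).
Hypothesis Y_fincodim : closed_fincodim S nrm Y.

Lemma fincodimZ a x : Y x -> Y (a *: x).
Proof.
case: Y_fincodim => _ Y0 Ylin _ _ Yx.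
by rewrite -[_ *: _]addr0; exact: Ylin.
Qed.

Lemma fincodim_sum n (F : 'I_n -> V) : (forall i, Y (F i)) -> Y (\sum_i F i).
Proof.
case: Y_fincodim => _ Y0 Ylin _ _ YF.
apply: (big_ind Y Y0) => [x y Yx Yy|i _]; last exact: YF.
by rewrite -[x]scale1r; exact: Ylin.
Qed.

Lemma fincodim_nontrivial_comb : exists m, forall u : 'I_m.+1 -> V, (forall j, S (u j)) ->
  exists g : 'I_m.+1 -> R, (exists j, g j != 0) /\ Y (\sum_j g j *: u j).
Proof.
case: Y_fincodim => _ _ _ _ [m [v [_ Sdec]]]; exists m => u Su.
have u_dec j : exists yc : V * ('I_m -> R), Y yc.1 /\ u j = yc.1 + \sum_i yc.2 i *: v i.
  by have [y [c [Yy uj]]] := Sdec _ (Su j); exists (y, c).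
have [yc yc_dec] := boolp.choice u_dec.
pose A : 'M[R]_(m.+1, m) := \matrix_(j, i) (yc j).2 i.
have /rowV0Pn [w /sub_kermxP wA w0] : kermx A != 0.
  by rewrite kermx_eq0 /row_free neq_ltn ltnS rank_leq_col.
exists (fun j => w 0 j); split.
  apply/existsP; apply: contraNT w0 => /existsPn w0'; apply/eqP/rowP => j.
  by rewrite mxE; apply/eqP/negPn/w0'.
have -> : \sum_j w 0 j *: u j = \sum_j w 0 j *: (yc j).1.
  under eq_bigr do rewrite (proj2 (yc_dec _)) scalerDr.
  rewrite big_split /= addrC -[RHS]add0r; congr (_ + _).
  under eq_bigr do rewrite scaler_sumr.
  rewrite exchange_big big1 //= => i _.
  have := congr1 (fun B : 'rV_m => B 0 i) wA; rewrite !mxE => wAi.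
  rewrite -[RHS](scale0r (v i)) -wAi scaler_suml.
  by apply: eq_bigr => j _; rewrite scalerA mxE.
by apply: fincodim_sum => j; apply: fincodimZ; case: (yc_dec j).
Qed.

End FiniteCodimension.

Section Game.
Context {R : realType}.
Variables (p : R) (q : \bar R) (k : nat).
Hypotheses (p_ge1 : 1 <= p) (q_ge1 : (1%:E <= q)%E).

Let p_gt0 : 0 < p. Proof. exact: lt_le_trans p_ge1. Qed.
Let pE_ge1 : (1%:E <= p%:E)%E. Proof. by rewrite lee_fin. Qed.

Lemma exists_level_vec_in_fincodim (Y : set (nat -> seq nat -> R)) j cs :
  closed_fincodim (Xw_space p q) (Xw_norm p q) Y -> (j < k)%N ->
  (forall t, lp_unit p (cs t)) ->
  exists2 h, lp_unit p h & Y (level_vec k (unit_seq j) [eta cs with j |-> h]).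
Proof.
move=> Y_fincodim jk cs_unit.
have [m comb] := fincodim_nontrivial_comb Y_fincodim.
have [|g [[i0 gi0] Yg]] := comb (fun i => level_vec k (unit_seq j) [eta cs with j |-> unit_seq i]).
  move=> i; apply: level_vec_in_Xw_space => // [|n jn].
    by apply: lp_unit_upd => //; exact: lp_unit_unit_seq.
  exact: unit_seq_out (leq_trans jk jn).
pose N := lq_norm p%:E g.
have N_gt0 : 0 < N.
  rewrite lt_def lq_norm_ge0 // andbT; apply: contraNN gi0 => /eqP N0.
  by have [_ /(_ _ N0) -> _ _] := lq_norm_is_norm pE_ge1 m.+1.
exists (extz (fun i => N^-1 * g i)).
  by apply: lp_unit_extz => //; rewrite lq_normZ // ger0_norm ?invr_ge0 ?ltW // mulVf ?gt_eqF.
rewrite /extz -level_vec_upd_sum.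
under eq_bigr do rewrite -scalerA.
by rewrite -scaler_sumr; exact: (fincodimZ Y_fincodim _ Yg).
Qed.

Lemma level_vec_basis_equiv C cs : 1 <= C -> (forall t, lp_unit p (cs t)) ->
  equiv_basis (Xw_norm p q) C (lq_norm q (k := k))
    (fun i : 'I_k => nth 0 [seq level_vec k (unit_seq i) cs | i <- iota 0 k] i).
Proof.
move=> C_ge1 cs_unit; exists 1, 1; split; rewrite ?mul1r // => a.
have -> : \sum_i a i *: nth 0 [seq level_vec k (unit_seq i) cs | i <- iota 0 k] i =
    level_vec k (extz a) cs.
  rewrite -level_vec_sum; apply: eq_bigr => i _.
  by rewrite (nth_map 0%N) ?size_iota // nth_iota.
rewrite Xw_norm_level_vec // => [|n]; last exact: extz_out.
by rewrite invr1 !mul1e /lq_seq (eq_fun (extz_ord a)).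
Qed.

Lemma level_vec_game C n : 1 <= C -> forall j cs, (j + n)%N = k ->
  (forall t, lp_unit p (cs t)) ->
  asym_game (Xw_space p q) (Xw_norm p q) C (lq_norm q (k := k)) n
    [seq level_vec k (unit_seq i) cs | i <- iota 0 j].
Proof.
move=> C_ge1; elim: n => [|n IH] j cs jnk cs_unit.
  by move: jnk; rewrite addn0 => ->; exact: level_vec_basis_equiv.
move=> Y Y_fincodim.
have jk : (j < k)%N by rewrite -jnk addnS ltnS leq_addr.
have [h h_unit Yx] := exists_level_vec_in_fincodim Y_fincodim jk cs_unit.
have cs'_unit := lp_unit_upd j cs_unit h_unit.
exists (level_vec k (unit_seq j) [eta cs with j |-> h]) => //; split.
  rewrite Xw_norm_level_vec // ?lq_seq_unit_seq // => i ji.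
  exact: unit_seq_out (leq_trans jk ji).
have -> : rcons [seq level_vec k (unit_seq i) cs | i <- iota 0 j]
    (level_vec k (unit_seq j) [eta cs with j |-> h]) =
    [seq level_vec k (unit_seq i) [eta cs with j |-> h] | i <- iota 0 j.+1].
  rewrite -addn1 iotaD map_cat cats1 add0n; congr rcons.
  by apply/eq_in_map => i; rewrite mem_iota add0n => /andP [_ ij]; rewrite level_vec_upd_lt.
by apply: IH; rewrite // addSnnS.
Qed.

Lemma level_vec_asym_game C : 1 <= C ->
  asym_game (Xw_space p q) (Xw_norm p q) C (lq_norm q (k := k)) k [::].
Proof.
move=> C_ge1; apply: (level_vec_game C_ge1 (j := 0) (cs := fun=> unit_seq 0)) => // t.
exact: lp_unit_unit_seq.
Qed.

End Game.

Theorem corollary5p6 (R : realType) (p : R) (q : \bar R)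
    (hp : 1 < p) (hq : (1%:E <= q)%E) (k : nat) :
  in_asym_k (Xw_space p q) (Xw_norm p q) (lq_norm q (k := k)).
Proof.
split; [exact: lq_norm_is_norm | exact: lq_norm_normalized_monotone |].
move=> eps eps_gt0; apply: (level_vec_asym_game k (ltW hp) hq).
by rewrite lerDl ltW.
Qed.
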